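(* If a topological space $X$ is $\alpha_1$, then for each $x\in X$, player ONE does not have a winning strategy in the game $\alpha^{\mathrm{game}}(X,x)$.
   Context: Convention: a ''sequence'' is a countably infinite set; a countably infinite set $A$ converges to $x$ if $x\notin A$ and every neighborhood of $x$ contains all but finitely many elements of $A$. $X$ is $\alpha_1$ if for each $x\in X$ and all pairwise disjoint sequences $S_1,S_2,\dots\subseteq X$ each converging to $x$, there is a sequence $S\subseteq\bigcup_nS_n$ converging to $x$ such that $S_n\setminus S$ is finite for all $n$. The game $\alpha^{\mathrm{game}}(X,x)$: in the $n$-th inning ONE chooses a sequence $S_n\subseteq X$ converging to $x$, TWO responds with an infinite $T_n\subseteq S_n$; TWO wins if $\bigcup_nT_n$ converges to $x$, otherwise ONE wins. *)

From HB Require Import structures.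
From mathcomp Require Import all_boot all_order.
From mathcomp Require Import boolp classical_sets cardinality topology.
Set Implicit Arguments. Unset Strict Implicit. Unset Printing Implicit Defensive.
Local Open Scope classical_set_scope.

Definition is_sequence {T : Type} (A : set T) : Prop :=
  countable A /\ infinite_set A.

Definition converges_to {T : topologicalType} (A : set T) (x : T) : Prop :=
  is_sequence A /\ ~ A x /\
  (forall U : set T, nbhs x U -> finite_set (A `\` U)).

Definition alpha1 (T : topologicalType) : Prop :=
  forall (x : T) (S : nat -> set T),
    (forall n, converges_to (S n) x) ->
    (forall n m, n <> m -> S n `&` S m = set0) ->
    exists S0 : set T,
      S0 `<=` \bigcup_n S n /\ converges_to S0 x /\
      (forall n, finite_set (S n `\` S0)).

(* The game alpha^game(X,x).  A strategy for ONE maps the finite history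
   (T_1,...,T_n) of TWO's previous moves to ONE's next move S_{n+1}, which
   must be a sequence converging to x. *)
Definition ONE_strategy {T : topologicalType} (x : T)
    (sigma : seq (set T) -> set T) : Prop :=
  forall h, converges_to (sigma h) x.

Definition history {T : Type} (t : nat -> set T) (n : nat) : seq (set T) :=
  map t (iota 0 n).

Definition legal_play {T : topologicalType} (sigma : seq (set T) -> set T)
    (t : nat -> set T) : Prop :=
  forall n, infinite_set (t n) /\ t n `<=` sigma (history t n).

Definition ONE_winning {T : topologicalType} (x : T)
    (sigma : seq (set T) -> set T) : Prop :=
  ONE_strategy x sigma /\
  forall t, legal_play sigma t -> ~ converges_to (\bigcup_n t n) x.

(* If TWO only ever answers with a tail of
   ONE's move, cut off after its first j elements in a fixed enumeration, then
   the reachable positions are indexed by finite sequences of cut-off points,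
   so ONE's possible moves form a countable family of sequences converging to
   x.  Disjointifying this family into infinite blocks and applying alpha_1
   gives one sequence S converging to x that contains all but finitely many
   points of each of ONE's possible moves.  TWO defeats sigma by always
   answering with a tail of ONE's move lying inside S: the union of TWO's
   moves is then an infinite subset of S, hence converges to x. *)

From mathcomp Require Import all_boot all_order.
From mathcomp Require Import boolp classical_sets cardinality topology.
Local Open Scope classical_set_scope.

Lemma countable_setU T (A B : set T) :
  countable A -> countable B -> countable (A `|` B).
Proof.
move=> cA cB.
have -> : A `|` B = \bigcup_(b in [set: bool]) (if b then A else B).
  apply/seteqP; split=> y; first by case=> Ay; [exists true | exists false].
  by case=> -[] _ ?; [left | right].
by apply: bigcup_countable => // -[].
Qed.

Section Convergence.
Context {T : topologicalType} {x : T}.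

Lemma converges_to_subset {A B : set T} :
  B `<=` A -> infinite_set B -> converges_to A x -> converges_to B x.
Proof.
move=> BA iB [[cA _] [Ax AU]]; split; first split=> //.
  exact: sub_countable (subset_card_le BA) cA.
split=> [/BA // | U /AU]; apply: sub_finite_set => y [/BA ? ?]; by split.
Qed.

Lemma converges_toU {A B : set T} :
  converges_to A x -> converges_to B x -> converges_to (A `|` B) x.
Proof.
move=> [[cA iA] [Ax AU]] [[cB _] [Bx BU]]; split; first split.
- exact: countable_setU.
- by move/(sub_finite_set (@subsetUl _ A B)).
split=> [[] // | U xU].
apply: (@sub_finite_set _ _ ((A `\` U) `|` (B `\` U))).
  by move=> y [[?|?] ?]; [left | right].
by rewrite finite_setU; split; [apply: AU | apply: BU].
Qed.

End Convergence.

Fixpoint partial_union {T} (A : nat -> set T) n : set T :=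
  if n is k.+1 then partial_union A k `|` A k.+1 else A 0.

Lemma sub_partial_union {T} {A : nat -> set T} {n} : A n `<=` partial_union A n.
Proof. by case: n => [|n] //= y; right. Qed.

Lemma partial_union_mono {T} {A : nat -> set T} {m n} :
  (m <= n)%N -> partial_union A m `<=` partial_union A n.
Proof.
by apply: homo_leq => [? // | ? ? ? /subset_trans /[apply] | k]; last exact: subsetUl.
Qed.

Section Alpha1Absorption.
Context {T : topologicalType} (x : T) (A : nat -> set T).
Hypothesis A_x : forall n, converges_to (A n) x.

Lemma converges_to_partial_union n : converges_to (partial_union A n) x.
Proof. by elim: n => [|n IHn] //=; apply: converges_toU. Qed.

Section Blocks.
Variable next : nat -> nat.
Hypothesis next_new : forall N, infinite_set (A (next N) `\` partial_union A N).

(* [cut k.+1] is large enough for the block below to contain the infinite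
   set [A (next (cut k)) `\` partial_union A (cut k)]. *)
Fixpoint cut k := if k is k.+1 then (next (cut k) + cut k).+1 else 0.

Definition block k : set T :=
  if k is k.+1 then partial_union A (cut k.+1) `\` partial_union A (cut k)
  else partial_union A 0.

Lemma cut_mono {m n} : (m <= n)%N -> (cut m <= cut n)%N.
Proof.
apply: (homo_leq (r := leq)) => [//|? ? ? /leq_trans /[apply]|k] //=.
by rewrite leqW ?leq_addl.
Qed.

Lemma leq_cut n : (n <= cut n)%N.
Proof. by elim: n => [|n IHn] //=; rewrite ltnS (leq_trans IHn) ?leq_addl. Qed.

Lemma block_sub k : block k `<=` partial_union A (cut k).
Proof. by case: k => [|k] //= y []. Qed.

Lemma converges_to_block k : converges_to (block k) x.
Proof.
apply: converges_to_subset (block_sub k) _ (converges_to_partial_union _).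
case: k => [|k]; first by case: (A_x 0) => -[].
have newB : A (next (cut k)) `\` partial_union A (cut k) `<=` block k.+1.
  have le_next : (next (cut k) <= cut k.+1)%N by rewrite ltnW // ltnS leq_addr.
  move=> y [Ay Ny]; split=> //.
  exact/(partial_union_mono le_next)/sub_partial_union.
exact: sub_infinite_set newB (next_new _).
Qed.

Lemma block_disjoint m n : m <> n -> block m `&` block n = set0.
Proof.
wlog mn : m n / (m < n)%N => [wlog /eqP | _].
  rewrite neq_ltn => /orP[] lt; [|rewrite setIC];
    by apply: wlog => //; apply/eqP; rewrite ?ltn_eqF ?gtn_eqF.
case: n mn => [//|n]; rewrite ltnS => mn.
apply/seteqP; split=> // y [/block_sub Bmy [_]].
by apply; apply: partial_union_mono (cut_mono mn) _ Bmy.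
Qed.

Lemma finite_partial_unionD (S : set T) :
  (forall k, finite_set (block k `\` S)) ->
  forall k, finite_set (partial_union A (cut k) `\` S).
Proof.
move=> blockS; elim=> [|k IHk]; first exact: (blockS 0).
apply: (@sub_finite_set _ _ ((partial_union A (cut k) `\` S) `|` (block k.+1 `\` S))).
  by move=> y [Ay Sy]; have [Uy | Uy] := pselect (partial_union A (cut k) y);
    [left | right].
by rewrite finite_setU; split.
Qed.

End Blocks.

Lemma alpha1_absorb : alpha1 T ->
  exists S, converges_to S x /\ forall n, finite_set (A n `\` S).
Proof.
move=> a1.
have [[N AN] | /forallNP noN] :=
  pselect (exists N, forall n, finite_set (A n `\` partial_union A N)).
  by exists (partial_union A N); split=> //; apply: converges_to_partial_union.
have /choice [next next_new] : forall N, exists n,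
    infinite_set (A n `\` partial_union A N).
  by move=> N; have /existsNP [n] := noN N; exists n.
have [S [_ [Sx blockS]]] := a1 x _ (converges_to_block _ next_new)
  (@block_disjoint next).
exists S; split=> // n.
apply: sub_finite_set (finite_partial_unionD next S blockS n) => y [Ay Sy].
split=> //; exact/(partial_union_mono (leq_cut next n))/sub_partial_union.
Qed.

End Alpha1Absorption.

Section Tails.
Context {T : Type}.

(* On a countable [A] this is injective; elsewhere it is arbitrary. *)
Definition enum_index (A : set T) : T -> nat :=
  get [set f : T -> nat | {in A &, injective f}].

Definition tail (A : set T) (j : nat) : set T :=
  [set y | A y /\ (j <= enum_index A y)%N].

Lemma tail_sub A j : tail A j `<=` A.
Proof. by move=> y []. Qed.

Lemma finite_setD_tail (A : set T) j :
  countable A -> finite_set (A `\` tail A j).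
Proof.
move=> /countable_injP injA; have inj := getPex injA.
apply: (@sub_finite_set _ _ [set y | A y /\ (enum_index A y < j)%N]).
  by move=> y [Ay /not_andP [//|/negP]]; rewrite -ltnNge.
apply: (@card_le_finite _ _ _ `I_j) => //.
apply/pcard_leP/injfunPex; exists (enum_index A); first by move=> y [].
by move=> y z /set_mem [Ay _] /set_mem [Az _]; apply: inj; apply: mem_set.
Qed.

Lemma tail_subset_of_finite_setD {A S : set T} :
  finite_set (A `\` S) -> exists j, tail A j `<=` S.
Proof.
move=> /(finite_image (enum_index A)) /finite_seqP [s Es].
exists (\max_(k <- s) k).+1 => y [Ay lt]; apply: contrapT => Sy.
have : [set` s] (enum_index A y) by rewrite -Es; exists y.
move=> /= /(@leq_bigmax_seq _ s xpredT id _) /(_ isT) /leq_ltn_trans /(_ lt).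
by rewrite ltnn.
Qed.

End Tails.

Lemma converges_to_tail {T : topologicalType} {x : T} {A : set T} j :
  converges_to A x -> converges_to (tail A j) x.
Proof.
move=> Ax; have [[cA iA] _] := Ax.
apply: converges_to_subset (tail_sub A j) _ Ax.
have sub_tail : A `\` (A `\` tail A j) `<=` tail A j.
  by move=> y [Ay nDy]; apply: contrapT => ?; apply: nDy.
exact: sub_infinite_set sub_tail (infinite_setD iA (finite_setD_tail A j cA)).
Qed.

Section Plays.
Context {T : Type}.

Fixpoint strategy_history (tau : seq (set T) -> set T) n : seq (set T) :=
  if n is k.+1 then rcons (strategy_history tau k) (tau (strategy_history tau k))
  else [::].

Definition strategy_play tau n : set T := tau (strategy_history tau n).

Lemma history_strategy_play tau n :
  history (strategy_play tau) n = strategy_history tau n.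
Proof.
elim: n => [//|n IHn].
by rewrite /history -addn1 iotaD map_cat cats1 add0n addn1 -/(history _ n) IHn.
Qed.

Definition tail_history (sigma : seq (set T) -> set T) (js : seq nat) :=
  foldl (fun hs j => rcons hs (tail (sigma hs) j)) [::] js.

Lemma strategy_history_tail sigma jf n : exists js,
  strategy_history (fun hs => tail (sigma hs) (jf hs)) n = tail_history sigma js.
Proof.
elim: n => [|n [js IHn]]; first by exists [::].
exists (rcons js (jf (tail_history sigma js))).
by rewrite /tail_history foldl_rcons /= IHn.
Qed.

End Plays.

Theorem proposition2p12 (X : topologicalType) :
  alpha1 X -> forall x : X, ~ exists sigma, ONE_winning x sigma.
Proof.
move=> a1 x [sigma [sigma_x win]].
pose moves n := sigma (tail_history sigma (odflt [::] (unpickle n))).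
have [S [Sx movesS]] := alpha1_absorb x moves (fun=> sigma_x _) a1.
have /choice [jf tailS] : forall hs, exists j,
    finite_set (sigma hs `\` S) -> tail (sigma hs) j `<=` S.
  move=> hs; have [fin | nfin] := pselect (finite_set (sigma hs `\` S)).
    by have [j] := tail_subset_of_finite_setD fin; exists j.
  by exists 0%N => /nfin.
pose tau hs := tail (sigma hs) (jf hs).
have tau_x hs : converges_to (tau hs) x := converges_to_tail (jf hs) (sigma_x hs).
pose t := strategy_play tau.
have legal : legal_play sigma t.
  move=> n; rewrite /t history_strategy_play; split; last exact: tail_sub.
  by have [[]] := tau_x (strategy_history tau n).
have t_S n : t n `<=` S.
  have [js E] := strategy_history_tail sigma jf n.
  rewrite /t /strategy_play E; apply: tailS.
  by have := movesS (pickle js); rewrite /moves pickleK.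
have tS : \bigcup_n t n `<=` S by move=> y [n _]; apply: t_S.
have t_inf : infinite_set (\bigcup_n t n).
  have [[_ t0_inf] _] := tau_x [::].
  have t0_sub : t 0%N `<=` \bigcup_n t n by move=> y ?; exists 0%N.
  exact: sub_infinite_set t0_sub t0_inf.
by have := converges_to_subset tS t_inf Sx; exact: win t legal.
Qed.
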